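(* Let $Q:\mathcal{Z}\times\Theta\to\mathbb{R}$ be measurable with $A(\theta)=EQ(Z,\theta)$ existing for all $\theta\in\Theta$ and $A(e_1),\dots,A(e_M)$ finite, and let $Q_1(z,\theta,\theta')=Q(z,\theta)-Q(z,\theta')$. Assume that for some $\beta>0$ there is a Borel function $\Psi_\beta:\Theta\times\Theta\to\mathbb{R}_+$ such that $\theta\mapsto\Psi_\beta(\theta,\theta')$ is concave on $\Theta$ for each fixed $\theta'\in\Theta$, $\Psi_\beta(\theta,\theta)=1$, and $E\exp(-Q_1(Z,\theta,\theta')/\beta)\le\Psi_\beta(\theta,\theta')$ for all $\theta,\theta'\in\Theta$. Then the mirror averaging aggregate $\hat\theta_n$ with parameter $\beta$ satisfies, for any $M\ge2$, $n\ge1$, $$E_{n-1}A(\hat\theta_n)\le\min_{1\le j\le M}A(e_j)+\frac{\beta\log M}{n}.$$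
   Context: $(\mathcal{Z},\mathfrak{F})$ is a measurable space, $M\ge2$, $\Theta=\{\theta\in\mathbb{R}^M:\sum_j\theta^{(j)}=1,\theta^{(j)}\ge0\}$, $e_j$ the $j$th unit vector, $z^{(j)}$ the $j$th component of $z\in\mathbb{R}^M$. $Z$ is a $\mathcal{Z}$-valued random variable with distribution $P$, expectation $E$; $Z_1,\dots,Z_n$ i.i.d. copies of $Z$; $E_{n-1}$ is expectation w.r.t. $(Z_1,\dots,Z_{n-1})$. Mirror averaging aggregate with parameter $\beta>0$: $W_\beta(\zeta)=\beta\log\big(\frac1M\sum_{j}e^{-\zeta^{(j)}/\beta}\big)$; $\zeta_0=0$, $\zeta_i=\zeta_{i-1}+u_i$ for $i=1,\dots,n-1$ with $u_i=(Q(Z_i,e_1),\dots,Q(Z_i,e_M))^\top$; $\theta_i=-\nabla W_\beta(\zeta_i)$, i.e. $\theta_i^{(j)}=e^{-\zeta_i^{(j)}/\beta}/\sum_ke^{-\zeta_i^{(k)}/\beta}$, for $i=0,\dots,n-1$; $\hat\theta_n=\frac1n\sum_{i=1}^n\theta_{i-1}$. *)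

From HB Require Import structures.
From mathcomp Require Import all_boot all_order all_algebra.
From mathcomp Require Import all_classical all_reals all_analysis.
Set Implicit Arguments. Unset Strict Implicit. Unset Printing Implicit Defensive.
Import Order.TTheory GRing.Theory Num.Theory.
Local Open Scope classical_set_scope.
Local Open Scope ring_scope.

Section mirror.
Variables (R : realType) (M : nat).

(* points of R^M are M-tuples (so that R^M carries the product sigma-algebra) *)
Definition unit_vec (j : 'I_M) : M.-tuple R := [tuple ((k == j)%:R : R) | k < M].

Definition simplex : set (M.-tuple R) :=
  [set th | (forall j, 0 <= tnth th j) /\ \sum_(j < M) tnth th j = 1].

Definition tconv (t : R) (a b : M.-tuple R) : M.-tuple R :=
  [tuple (1 - t) * tnth a j + t * tnth b j | j < M].

Definition concave_on (D : set (M.-tuple R)) (f : M.-tuple R -> R) : Prop :=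
  forall a b t, D a -> D b -> 0 <= t <= 1 ->
    (1 - t) * f a + t * f b <= f (tconv t a b).

Variable (T : Type) (Q : T -> M.-tuple R -> R).

(* zeta_i = u_1 + ... + u_i, computed from the observations zs = (Z_1, ..., Z_{n-1}) *)
Definition zeta (zs : seq T) (i : nat) (j : 'I_M) : R :=
  \sum_(z <- take i zs) Q z (unit_vec j).

(* theta_i = - grad W_beta (zeta_i) *)
Definition mtheta (beta : R) (zs : seq T) (i : nat) : M.-tuple R :=
  [tuple expR (- zeta zs i j / beta) / \sum_(k < M) expR (- zeta zs i k / beta) | j < M].

(* mirror averaging aggregate hat theta_n = (1/n) sum_{i=1}^n theta_{i-1} *)
Definition mirror_avg (beta : R) (n : nat) (zs : seq T) : M.-tuple R :=
  [tuple n%:R^-1 * \sum_(i < n) tnth (mtheta beta zs i) j | j < M].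

End mirror.

Section iter_expect.
Variables (d : measure_display) (T : measurableType d) (R : realType)
  (P : probability T R).

(* E_k f: expectation w.r.t. k i.i.d. copies (Z_1,...,Z_k) of Z ~ P, written as
   the iterated integral int dP(z_1) ... int dP(z_k) f [:: z_1; ...; z_k] *)
Fixpoint Eiter (k : nat) (f : seq T -> \bar R) : \bar R :=
  match k with
  | 0 => f [::]
  | k'.+1 => (\int[P]_z Eiter k' (fun s => f (z :: s)))%E
  end.

Definition expect_exists (f : T -> R) : Prop :=
  (\int[P]_z (Num.max (f z) 0)%:E < +oo)%E \/ (\int[P]_z (Num.max (- f z) 0)%:E < +oo)%E.

End iter_expect.

Arguments simplex : clear implicits.
Arguments unit_vec : clear implicits.

From HB Require Import structures.
From mathcomp Require Import all_boot all_order all_algebra.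
From mathcomp Require Import all_classical all_reals all_analysis.
From mathcomp Require Import measurable_realfun ring lra.
Import Order.TTheory GRing.Theory Num.Theory.
Local Open Scope classical_set_scope.
Local Open Scope ring_scope.
Set Implicit Arguments. Unset Strict Implicit. Unset Printing Implicit Defensive.

(* Write lse(v) = ln sum_j exp(-v_j/beta).  The weights theta_i are the softmax
   of the cumulative losses zeta_i, so that lse(zeta_i + u) - lse(zeta_i) =
   ln sum_j theta_i^(j) exp(-u_j/beta).  For a fresh observation z, concavity of
   ln and ln y <= y - 1 give the pointwise bound
     Q(z, hat theta) <= beta (Y - 1) - (beta/n) sum_i [lse(zeta_i + u(z)) - lse(zeta_i)]
   with Y = sum_j hat theta^(j) exp(-(Q(z,e_j) - Q(z,hat theta))/beta)
   ([exp_excess] below).  The hypothesis on Psi and the concavity of Psi, used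
   at the vertices of the simplex, give E Y <= Psi(hat theta, hat theta) = 1.  Taking expectations, the
   increments telescope to E lse(zeta_n) - ln M >= -(n/beta) A(e_j) - ln M. *)

Section simplex.
Context (R : realType) (M : nat).

Lemma sum_unit_vec (j : 'I_M) (c : 'I_M -> R) :
  \sum_(k < M) tnth (unit_vec R M j) k * c k = c j.
Proof.
rewrite (bigD1 j) //= big1 ?addr0 => [|k /negbTE kj]; rewrite tnth_mktuple.
  by rewrite eqxx mul1r.
by rewrite kj mul0r.
Qed.

Lemma simplex_unit_vec (j : 'I_M) : simplex R M (unit_vec R M j).
Proof.
split=> [k|]; first by rewrite tnth_mktuple ler0n.
by rewrite -[RHS](sum_unit_vec j (fun=> 1)); apply: eq_bigr => k _; rewrite mulr1.
Qed.

Lemma sum_tconv (t : R) (a b : M.-tuple R) (c : 'I_M -> R) :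
  \sum_(k < M) tnth (tconv t a b) k * c k =
  (1 - t) * \sum_(k < M) tnth a k * c k + t * \sum_(k < M) tnth b k * c k.
Proof.
rewrite !mulr_sumr -big_split /=; apply: eq_bigr => k _.
by rewrite tnth_mktuple mulrDl !mulrA.
Qed.

Lemma measurable_simplex : measurable (simplex R M).
Proof.
pose neg_part (th : M.-tuple R) := \sum_(j < M) (`|tnth th j| - tnth th j).
pose total (th : M.-tuple R) := \sum_(j < M) tnth th j.
have -> : simplex R M = neg_part @^-1` [set 0] `&` total @^-1` [set 1].
  apply/seteqP; split=> th [] /=.
    by move=> th_ge0 th_sum; split=> //; apply: big1 => j _; rewrite ger0_norm ?subrr.
  move=> th_neg th_sum; split=> // j.
  have term_ge0 i : 0 <= `|tnth th i| - tnth th i by rewrite subr_ge0 ler_norm.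
  have /eqP := @psumr_eq0P _ _ _ _ (fun i _ => term_ge0 i) th_neg j isT.
  by rewrite subr_eq0 => /eqP <-.
have mtnth j : measurable_fun setT (fun th : M.-tuple R => tnth th j).
  exact: measurable_tnth.
have mneg : measurable_fun setT neg_part.
  apply: measurable_sum => j; apply: measurable_funB => //.
  exact: measurableT_comp (mtnth j).
have mtotal : measurable_fun setT total by exact: measurable_sum.
apply: measurableI; rewrite -[X in measurable X]setTI.
  exact: mneg measurableT _ (measurable_set1 0).
exact: mtotal measurableT _ (measurable_set1 1).
Qed.

Section vertices.
Variable f : M.-tuple R -> R.
Hypothesis f_concave : concave_on (simplex R M) f.

Lemma le_concave_vertices_support m th : simplex R M th ->
  (forall j : 'I_M, (m <= j)%N -> tnth th j = 0) ->
  \sum_(j < M) tnth th j * f (unit_vec R M j) <= f th.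
Proof.
elim: m th => [|m IH] th [th_ge0 th_sum] th_supp.
  move: th_sum; rewrite big1 => [/eqP|j _]; last exact: th_supp.
  by rewrite eq_sym oner_eq0.
have [Mm|mM] := leqP M m.
  by apply: IH => // j mj; have := leq_trans Mm mj; rewrite leqNgt ltn_ord.
pose jm : 'I_M := Ordinal mM; pose t := tnth th jm.
have others_sum : \sum_(k < M | k != jm) tnth th k = 1 - t.
  by rewrite -th_sum [in RHS](bigD1 jm) //= addrC addrK.
have others_ge0 : 0 <= 1 - t by rewrite -others_sum sumr_ge0.
have [t1|t_neq1] := eqVneq t 1.
  have others0 k : k != jm -> tnth th k = 0.
    move=> kj; move: others_sum; rewrite t1 subrr => /eqP.
    by rewrite psumr_eq0 // => /allP /(_ k (mem_index_enum _)); rewrite kj => /eqP.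
  have -> : th = unit_vec R M jm.
    apply: eq_from_tnth => k; rewrite tnth_mktuple.
    by case: eqVneq => [->|/others0]; rewrite ?t1.
  by rewrite sum_unit_vec.
have t_pos : 0 < 1 - t by rewrite lt_def subr_eq0 eq_sym t_neq1.
(* [th] is a convex combination of the vertex [jm] and of a point [mu]
   supported on the first [m] coordinates. *)
pose mu := [tuple if k == jm then 0 else tnth th k / (1 - t) | k < M].
have mu_simplex : simplex R M mu.
  split=> [k|].
    by rewrite tnth_mktuple; case: ifP => // _; rewrite divr_ge0.
  rewrite (bigD1 jm) //= tnth_mktuple eqxx add0r.
  under eq_bigr => k kj do rewrite tnth_mktuple (negbTE kj).
  by rewrite -mulr_suml others_sum divff // gt_eqF.
have mu_supp (k : 'I_M) : (m <= k)%N -> tnth mu k = 0.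
  rewrite leq_eqVlt tnth_mktuple => /orP[/eqP mk|mk]; last by rewrite th_supp ?mul0r ?if_same.
  by rewrite ifT //; apply/eqP/val_inj.
have th_conv : th = tconv t mu (unit_vec R M jm).
  apply: eq_from_tnth => k; rewrite !tnth_mktuple.
  case: eqVneq => [->|_]; first by rewrite mulr0 add0r mulr1.
  by rewrite mulr0 addr0 mulrC divfK // gt_eqF.
have t_itv : 0 <= t <= 1 by rewrite th_ge0 -subr_ge0.
rewrite th_conv sum_tconv sum_unit_vec.
apply: le_trans (f_concave mu_simplex (simplex_unit_vec jm) t_itv).
by rewrite lerD2r ler_wpM2l // IH.
Qed.

Lemma le_concave_vertices th : simplex R M th ->
  \sum_(j < M) tnth th j * f (unit_vec R M j) <= f th.
Proof.
move=> th_simplex; apply: (le_concave_vertices_support (m := M)) => // j.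
by rewrite leqNgt ltn_ord.
Qed.

End vertices.
End simplex.

Section integral.
Context d (T : measurableType d) (R : realType) (mu : measure T R).
Local Open Scope ereal_scope.

Lemma ge0_le_integral_any (f g : T -> \bar R) : (forall x, 0 <= f x) ->
  (forall x, f x <= g x) -> \int[mu]_x f x <= \int[mu]_x g x.
Proof.
move=> f_ge0 fg; have g_ge0 x := le_trans (f_ge0 x) (fg x).
rewrite !ge0_integralTE //; apply: ereal_sup_le => _ [h /= hf <-].
by exists h => //= x; exact: le_trans (hf x) (fg x).
Qed.

Lemma le_integral_any (f g : T -> \bar R) :
  (forall x, f x <= g x) -> \int[mu]_x f x <= \int[mu]_x g x.
Proof.
move=> fg; rewrite (integralE _ _ f) (integralE _ _ g); apply: leeB.
  apply: ge0_le_integral_any => x; first exact: funepos_ge0.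
  by rewrite !funeposE le_max2.
apply: ge0_le_integral_any => x; first exact: funeneg_ge0.
by rewrite !funenegE le_max2 // leeN2.
Qed.

Lemma measurable_fun_integral_snd dX (X : measurableType dX)
    (nu : {sigma_finite_measure set T -> \bar R}) (F : X * T -> \bar R) :
  measurable_fun setT F -> measurable_fun setT (fun x => \int[nu]_y F (x, y)).
Proof.
move=> mF; have -> : (fun x => \int[nu]_y F (x, y)) =
    (fun x => \int[nu]_y F^\+ (x, y) - \int[nu]_y F^\- (x, y)).
  by apply/funext => x; rewrite integralE; congr (_ - _);
    apply: eq_integral => y _; rewrite ?funeposE ?funenegE.
apply: emeasurable_funB.
  exact: measurable_fun_fubini_tonelli_F (measurable_funepos mF) (funepos_ge0 _).
exact: measurable_fun_fubini_tonelli_F (measurable_funeneg mF) (funeneg_ge0 _).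
Qed.

End integral.

(* [phi] is measurable for the product sigma-algebra on [R^M], stated without
   equipping ['I_M -> R] with that structure. *)
Definition coordwise_measurable (R : realType) (M : nat) (phi : ('I_M -> R) -> R) :=
  forall dX (X : measurableType dX) (a : X -> 'I_M -> R),
    (forall j, measurable_fun setT (fun x => a x j)) ->
    measurable_fun setT (fun x => phi (a x)).

Section iterated_expectation.
Context d (Z : measurableType d) (R : realType) (P : probability Z R).
Local Open Scope ereal_scope.

Lemma integral_cst_probability (c : \bar R) : \int[P]_z c = c.
Proof. by rewrite integral_cst // [X in _ * X]probability_setT mule1. Qed.

Lemma integral_affine (v : Z -> R) (a b : R) : P.-integrable setT (EFin \o v) ->
  \int[P]_z (a + b * v z)%:E = (a + b * fine (\int[P]_z (v z)%:E))%:E.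
Proof.
move=> v_int; under eq_integral do rewrite EFinD EFinM.
rewrite integralD //; last 2 first.
- exact: finite_measure_integrable_cst.
- exact: integrableZl.
rewrite integralZl // integral_cst_probability EFinD EFinM fineK //.
exact: integrable_fin_num.
Qed.

Lemma le_Eiter k (f g : seq Z -> \bar R) :
  (forall s, f s <= g s) -> Eiter P k f <= Eiter P k g.
Proof.
elim: k f g => [|k IH] f g fg //=.
by apply: le_integral_any => z; apply: IH => s; exact: fg.
Qed.

Lemma Eiter_cst k (c : \bar R) : Eiter P k (fun=> c) = c.
Proof. by elim: k => //= k ->; rewrite integral_cst_probability. Qed.

Lemma Eiter_take k l (f : seq Z -> \bar R) :
  Eiter P (k + l) (fun s => f (take k s)) = Eiter P k f.
Proof.
elim: k f => [|k IH] f /=; last by apply: eq_integral => z _; rewrite -IH.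
by under eq_fun do rewrite take0; rewrite Eiter_cst.
Qed.

Lemma Eiter_take_le k i (f : seq Z -> \bar R) : (i <= k)%N ->
  Eiter P k (fun s => f (take i s)) = Eiter P i f.
Proof. by move=> ik; rewrite -(subnKC ik) Eiter_take. Qed.

Lemma Eiter_rcons k (f : seq Z -> \bar R) :
  Eiter P k.+1 f = Eiter P k (fun s => \int[P]_z f (rcons s z)).
Proof.
elim: k f => [|k IH] f //=.
by apply: eq_integral => z _; exact: (IH (fun s => f (z :: s))).
Qed.

Lemma Eiter_affine (v : Z -> R) k (a b : R) : P.-integrable setT (EFin \o v) ->
  Eiter P k (fun s => (a + b * \sum_(z <- s) v z)%:E) =
  (a + b * k%:R * fine (\int[P]_z (v z)%:E))%:E.
Proof.
move=> v_int; elim: k a => [|k IH] a /=; first by rewrite big_nil !mulr0 mul0r.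
under eq_integral => z _.
  under eq_fun do rewrite big_cons mulrDr addrA.
  rewrite IH; over.
under eq_integral do rewrite /= -addrA (addrC (b * v _)%R) addrA.
rewrite integral_affine //.
by congr EFin; rewrite -nat1r; ring.
Qed.

(* [jointly_measurable k g] means that the map
   (..((x, z_1), z_2).., z_k) |-> g x [:: z_1; ...; z_k] is measurable. *)
Fixpoint jointly_measurable (k : nat) :
    forall dX (X : measurableType dX), (X -> seq Z -> R) -> Prop :=
  match k with
  | 0 => fun dX X g => measurable_fun setT (fun x => g x [::])
  | k'.+1 => fun dX X g =>
      @jointly_measurable k' _ (X * Z)%type (fun p s => g p.1 (p.2 :: s))
  end.
Arguments jointly_measurable k {dX X}.

Lemma jointly_measurable_cst k dX (X : measurableType dX) (c : R) :
  jointly_measurable k (fun (_ : X) (_ : seq Z) => c).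
Proof. by elim: k dX X => [|k IH] dX X /=; [exact: measurable_cst | exact: IH]. Qed.

Lemma jointly_measurable_linear k dX (X : measurableType dX)
    (g1 g2 : X -> seq Z -> R) (a b : R) :
  jointly_measurable k g1 -> jointly_measurable k g2 ->
  jointly_measurable k (fun x s => a * g1 x s + b * g2 x s)%R.
Proof.
elim: k dX X g1 g2 => [|k IH] dX X g1 g2 /=; last exact: IH.
by move=> m1 m2; apply: measurable_funD; apply: measurable_funM.
Qed.

Lemma measurable_Eiter k dX (X : measurableType dX) (g : X -> seq Z -> R) :
  jointly_measurable k g ->
  measurable_fun setT (fun x => Eiter P k (fun s => (g x s)%:E)).
Proof.
elim: k dX X g => [|k IH] dX X g /= mg; first exact/measurable_EFinP.
exact: measurable_fun_integral_snd (IH _ _ _ mg).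
Qed.

Section dominated.
Variable w : Z -> R.
Hypothesis w_int : P.-integrable setT (EFin \o w).

(* Affine domination in the sample sum makes every level of [Eiter] integrable,
   so that [Eiter] is linear on such families. *)
Definition dominated k dX (X : measurableType dX) (g : X -> seq Z -> R) :=
  jointly_measurable k g /\ exists (c : X -> R) (K : R),
    forall x s, (`|g x s| <= c x + K * \sum_(z <- s) w z)%R.
Arguments dominated k {dX X}.

Lemma dominated_cons k dX (X : measurableType dX) (g : X -> seq Z -> R) :
  dominated k.+1 g -> dominated k (fun p s => g p.1 (p.2 :: s)).
Proof.
move=> [mg [c [K g_le]]]; split=> //.
exists (fun p => c p.1 + K * w p.2)%R, K => p s.
by rewrite (le_trans (g_le _ _)) // big_cons mulrDr addrA.
Qed.

Lemma Eiter_bounded k (g : seq Z -> R) (c K : R) :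
  (forall s, `|g s| <= c + K * \sum_(z <- s) w z)%R ->
  Eiter P k (fun s => (g s)%:E) \is a fin_num /\
  (`|fine (Eiter P k (fun s => (g s)%:E))| <=
    c + K * k%:R * fine (\int[P]_z (w z)%:E))%R.
Proof.
move=> g_le.
have up : Eiter P k (fun s => (g s)%:E) <= (c + K * k%:R * fine (\int[P]_z (w z)%:E))%:E.
  rewrite -Eiter_affine //; apply: le_Eiter => s; rewrite lee_fin.
  exact: le_trans (ler_norm _) (g_le s).
have lo : (- c + - K * k%:R * fine (\int[P]_z (w z)%:E))%:E <= Eiter P k (fun s => (g s)%:E).
  rewrite -Eiter_affine //; apply: le_Eiter => s; rewrite lee_fin !mulNr -opprD.
  by move: (g_le s); rewrite ler_norml => /andP[].
have g_fin : Eiter P k (fun s => (g s)%:E) \is a fin_num.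
  by rewrite fin_numElt (lt_le_trans _ lo) ?ltNyr // (le_lt_trans up) ?ltry.
split=> //; rewrite ler_norml -!lee_fin fineK // up andbT.
by rewrite (le_trans _ lo) // lee_fin !mulNr opprD.
Qed.

Lemma integrable_dominated (F : Z -> \bar R) (c K : R) : measurable_fun setT F ->
  (forall z, `|F z| <= (c + K * w z)%:E) -> P.-integrable setT F.
Proof.
move=> mF F_le; apply: (le_integrable measurableT mF (g := fun z => (c + K * w z)%:E)).
  by move=> z _; exact: le_trans (F_le z) (lee_abs _).
have -> : (fun z => (c + K * w z)%:E) = (EFin \o cst c) \+ (fun z => K%:E * (EFin \o w) z).
  by apply/funext => z /=; rewrite EFinD EFinM.
apply: integrableD => //; first exact: finite_measure_integrable_cst.
exact: integrableZl.
Qed.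

Lemma integrable_Eiter_cons k dX (X : measurableType dX) (g : X -> seq Z -> R) x :
  dominated k.+1 g ->
  P.-integrable setT (fun z => Eiter P k (fun s => (g x (z :: s))%:E)).
Proof.
move=> g_dom; have [mg [c [K g_le]]] := g_dom.
have g_cons_le z s :
    (`|g x (z :: s)| <= (c x + K * w z) + K * \sum_(y <- s) w y)%R.
  by rewrite (le_trans (g_le _ _)) // big_cons mulrDr addrA.
apply: (@integrable_dominated _ (c x + K * k%:R * fine (\int[P]_z (w z)%:E)) K).
  exact: measurable_fun_pair2 x (measurable_Eiter (dominated_cons g_dom).1).
move=> z; have [Eiter_fin Eiter_le] := Eiter_bounded k (g_cons_le z).
rewrite -(fineK Eiter_fin) /= lee_fin (le_trans Eiter_le) //.
by rewrite -!addrA lerD2l addrC.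
Qed.

Lemma Eiter_linear k dX (X : measurableType dX) (g1 g2 : X -> seq Z -> R) (a b : R) x :
  dominated k g1 -> dominated k g2 ->
  Eiter P k (fun s => (a * g1 x s + b * g2 x s)%:E) =
  a%:E * Eiter P k (fun s => (g1 x s)%:E) + b%:E * Eiter P k (fun s => (g2 x s)%:E).
Proof.
elim: k dX X g1 g2 x => [|k IH] dX X g1 g2 x g1_dom g2_dom /=.
  by rewrite EFinD !EFinM.
have g1_int := integrable_Eiter_cons x g1_dom.
have g2_int := integrable_Eiter_cons x g2_dom.
under eq_integral => z _.
  rewrite (IH _ _ _ _ (x, z) (dominated_cons g1_dom) (dominated_cons g2_dom)) /=.
  over.
by rewrite integralD ?integralZl //; exact: integrableZl.
Qed.

Lemma dominated_linear k dX (X : measurableType dX) (g1 g2 : X -> seq Z -> R) (a b : R) :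
  dominated k g1 -> dominated k g2 -> dominated k (fun x s => a * g1 x s + b * g2 x s)%R.
Proof.
move=> [m1 [c1 [K1 g1_le]]] [m2 [c2 [K2 g2_le]]].
split; first exact: jointly_measurable_linear.
exists (fun x => `|a| * c1 x + `|b| * c2 x)%R, (`|a| * K1 + `|b| * K2)%R => x s.
rewrite (le_trans (ler_normD _ _)) // !normrM.
have := ler_wpM2l (normr_ge0 a) (g1_le x s).
have := ler_wpM2l (normr_ge0 b) (g2_le x s).
move=> le2 le1; apply: le_trans (lerD le1 le2) _.
by rewrite le_eqVlt; apply/orP; left; apply/eqP; ring.
Qed.

Lemma dominated_sum k dX (X : measurableType dX) (f : nat -> X -> seq Z -> R) m :
  (forall i, (i < m)%N -> dominated k (f i)) ->
  dominated k (fun x s => \sum_(i < m) f i x s)%R.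
Proof.
elim: m => [|m IH] f_dom.
  under eq_fun do under eq_fun do rewrite big_ord0.
  split; first exact: jointly_measurable_cst.
  by exists (fun=> 0%R), 0%R => x s; rewrite normr0 mul0r addr0.
under eq_fun do under eq_fun do
  rewrite big_ord_recr /= -[X in (X + _)%R]mul1r -[X in (_ + X)%R]mul1r.
apply: dominated_linear; last exact: f_dom.
by apply: IH => i im; apply: f_dom; exact: ltnW.
Qed.

Lemma Eiter_sum k dX (X : measurableType dX) (f : nat -> X -> seq Z -> R) m x :
  (forall i, (i < m)%N -> dominated k (f i)) ->
  Eiter P k (fun s => (\sum_(i < m) f i x s)%:E) =
  \sum_(i < m) Eiter P k (fun s => (f i x s)%:E).
Proof.
elim: m => [|m IH] f_dom.
  by under eq_fun do rewrite big_ord0; rewrite big_ord0 Eiter_cst.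
have f_dom' i : (i < m)%N -> dominated k (f i) by move=> im; apply: f_dom; exact: ltnW.
under eq_fun do rewrite big_ord_recr /= -[X in (X + _)%R]mul1r -[X in (_ + X)%R]mul1r.
rewrite (Eiter_linear 1 1 x (dominated_sum f_dom') (f_dom m (ltnSn m))).
by rewrite !mul1e IH // big_ord_recr.
Qed.

End dominated.

Section cumulative_sums.
Variables (M : nat) (q : 'I_M -> Z -> R).
Hypothesis mq : forall j, measurable_fun setT (q j).

Lemma jointly_measurable_cumsum (phi : ('I_M -> R) -> R) k i dX
    (X : measurableType dX) (a : X -> 'I_M -> R) :
  coordwise_measurable phi -> (forall j, measurable_fun setT (fun x => a x j)) ->
  jointly_measurable k (fun x s => phi (fun j => a x j + \sum_(z <- take i s) q j z)%R).
Proof.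
move=> mphi; elim: k i dX X a => [|k IH] i dX X a ma /=.
  by apply: mphi => j; apply: measurable_funD.
have ma1 j : measurable_fun setT (fun p : X * Z => a p.1 j).
  exact: measurableT_comp (ma j) measurable_fst.
case: i => [|i].
  have := IH 0%N _ _ (fun p j => a p.1 j) ma1.
  by under [in X in X -> _]eq_fun do under eq_fun do rewrite take0.
have := IH i _ _ (fun p j => a p.1 j + q j p.2)%R.
under [in X in _ -> X]eq_fun do under eq_fun do under eq_fun do rewrite /= big_cons addrA.
apply=> j; apply: measurable_funD => //.
exact: measurableT_comp (mq j) measurable_snd.
Qed.

End cumulative_sums.
End iterated_expectation.

Section log_sum_exp.
Context (R : realType) (M : nat) (beta : R).

(* [beta * (lse v - ln M)] is the potential [W_beta(v)] of the aggregate. *)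
Definition lse (v : 'I_M -> R) : R := ln (\sum_(j < M) expR (- v j / beta)).

Lemma lse0 : lse (fun=> 0) = ln M%:R.
Proof.
rewrite /lse; under eq_bigr do rewrite oppr0 mul0r expR0.
by rewrite sumr_const card_ord.
Qed.

Lemma measurable_lse : coordwise_measurable lse.
Proof.
move=> dX X a ma; apply: measurableT_comp (@measurable_ln R) _.
apply: measurable_sum => j; apply: measurableT_comp (@measurable_expR R) _.
by apply: measurable_funM => //; exact: measurable_funN.
Qed.

Hypotheses (M_gt0 : (0 < M)%N) (beta_gt0 : 0 < beta).

Lemma sum_expR_gt0 (v : 'I_M -> R) : 0 < \sum_(j < M) expR (- v j / beta).
Proof.
pose j0 : 'I_M := Ordinal M_gt0.
by rewrite (bigD1 j0) //= ltr_pwDl ?expR_gt0 // sumr_ge0 // => j _; exact: expR_ge0.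
Qed.

Lemma lse_ge (v : 'I_M -> R) j : - v j / beta <= lse v.
Proof.
rewrite -[leLHS]expRK ler_ln ?posrE ?expR_gt0 ?sum_expR_gt0 //.
by rewrite (bigD1 j) //= lerDl sumr_ge0 // => k _; exact: expR_ge0.
Qed.

Lemma norm_lse_le (v : 'I_M -> R) :
  `|lse v| <= ln M%:R + (\sum_(j < M) `|v j|) / beta.
Proof.
set V := (\sum_(j < M) `|v j|) / beta.
have v_le j : `|- v j / beta| <= V.
  rewrite normrM normrN normfV (gtr0_norm beta_gt0) ler_pM2r ?invr_gt0 //.
  by rewrite (bigD1 j) //= lerDl sumr_ge0.
have sum_cst (c : R) : \sum_(j < M) c = M%:R * c.
  by rewrite sumr_const card_ord mulr_natl.
have M_pos : (0 < M%:R :> R) by rewrite ltr0n.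
have lo : M%:R * expR (- V) <= \sum_(j < M) expR (- v j / beta).
  rewrite -sum_cst ler_sum // => j _; rewrite ler_expR lerNl.
  by rewrite (le_trans _ (v_le j)) // -normrN ler_norm.
have up : \sum_(j < M) expR (- v j / beta) <= M%:R * expR V.
  by rewrite -sum_cst ler_sum // => j _; rewrite ler_expR (le_trans (ler_norm _)).
have lnM_ge0 : 0 <= ln (M%:R : R) by rewrite ln_ge0 // ler1n.
rewrite ler_norml; apply/andP; split.
  apply: (@le_trans _ _ (ln (M%:R * expR (- V)))).
    by rewrite lnM ?posrE ?expR_gt0 // expRK; lra.
  by rewrite ler_ln ?posrE ?mulr_gt0 ?expR_gt0 ?sum_expR_gt0.
apply: (@le_trans _ _ (ln (M%:R * expR V))).
  by rewrite ler_ln ?posrE ?mulr_gt0 ?expR_gt0 ?sum_expR_gt0.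
by rewrite lnM ?posrE ?expR_gt0 // expRK.
Qed.

Lemma norm_lse_add_le (v u : 'I_M -> R) :
  `|lse (fun j => v j + u j)| <=
    ln M%:R + (\sum_(j < M) `|v j|) / beta + beta^-1 * \sum_(j < M) `|u j|.
Proof.
apply: le_trans (norm_lse_le _) _.
rewrite -addrA lerD2l (mulrC beta^-1) -mulrDl ler_pM2r ?invr_gt0 //.
by rewrite -big_split ler_sum // => j _; exact: ler_normD.
Qed.

Lemma lse_addE (v u : 'I_M -> R) :
  lse (fun j => v j + u j) - lse v =
  ln (\sum_(j < M) expR (- v j / beta) / (\sum_(k < M) expR (- v k / beta)) *
                   expR (- u j / beta)).
Proof.
rewrite /lse -ln_div ?posrE ?sum_expR_gt0 //; congr ln.
rewrite mulr_suml; apply: eq_bigr => j _.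
by rewrite mulrAC -expRD opprD mulrDl.
Qed.

End log_sum_exp.

Section averaging_inequality.
Context (R : realType).

Lemma ln_le_subr1 (x : R) : 0 < x -> ln x <= x - 1.
Proof.
by move=> x_gt0; have := @le_ln1Dx R (x - 1); rewrite [1 + _]addrC subrK; apply; lra.
Qed.

Lemma sum_ln_le n (a : 'I_n -> R) : (forall i, 0 < a i) ->
  \sum_(i < n) ln (a i) <= n%:R * ln (n%:R^-1 * \sum_(i < n) a i).
Proof.
case: n a => [|n] a a_gt0; first by rewrite big_ord0 mul0r.
set m := (_^-1 * _); have n_pos : (0 : R) < n.+1%:R by rewrite ltr0n.
have m_gt0 : 0 < m.
  rewrite mulr_gt0 ?invr_gt0 // (bigD1 ord0) //= ltr_pwDl //.
  by rewrite sumr_ge0 // => i _; exact: ltW.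
have ln_le i : ln (a i) <= ln m + (a i / m - 1).
  rewrite -[in leLHS](divfK (lt0r_neq0 m_gt0) (a i)) lnM ?posrE ?divr_gt0 //.
  by rewrite addrC lerD2l ln_le_subr1 ?divr_gt0.
apply: le_trans (ler_sum _ (fun i _ => ln_le i)) _.
rewrite !big_split /= !sumr_const card_ord -mulr_suml.
have -> : \sum_(i < n.+1) a i = n.+1%:R * m by rewrite /m mulrA mulfV ?mul1r ?lt0r_neq0.
by rewrite mulfK ?lt0r_neq0 // mulNrn subrr addr0 mulr_natl.
Qed.

Lemma simplex_dot_gt0 M (th : M.-tuple R) (x : 'I_M -> R) :
  simplex R M th -> (forall j, 0 < x j) -> 0 < \sum_(j < M) tnth th j * x j.
Proof.
move=> [th_ge0 th_sum] x_gt0.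
have term_ge0 j : 0 <= tnth th j * x j by rewrite mulr_ge0 // ltW.
rewrite lt_def sumr_ge0 ?andbT //; apply: contra_eqN th_sum => /eqP sum0.
rewrite big1 => [|j _]; first by rewrite eq_sym oner_neq0.
have /eqP := @psumr_eq0P _ _ _ _ (fun j _ => term_ge0 j) sum0 j isT.
by rewrite mulf_eq0 (gt_eqF (x_gt0 j)) orbF => /eqP.
Qed.

Lemma le_tilted_mean M n (beta : R) (th : 'I_n -> M.-tuple R) (x : 'I_M -> R) (t : R) :
  0 < beta -> (0 < n)%N -> (forall i, simplex R M (th i)) -> (forall j, 0 < x j) ->
  t <= beta * (expR (t / beta) *
                 \sum_(j < M) (n%:R^-1 * \sum_(i < n) tnth (th i) j) * x j - 1)
       - beta / n%:R * \sum_(i < n) ln (\sum_(j < M) tnth (th i) j * x j).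
Proof.
move=> beta_gt0 n_gt0 th_simplex x_gt0.
set a := fun i => \sum_(j < M) tnth (th i) j * x j.
have a_gt0 i : 0 < a i by exact: simplex_dot_gt0.
set m := \sum_(j < M) _.
have mE : m = n%:R^-1 * \sum_(i < n) a i.
  rewrite /m /a exchange_big mulr_sumr; apply: eq_bigr => j _.
  by rewrite -mulrA mulr_suml.
have m_gt0 : 0 < m.
  rewrite mE mulr_gt0 ?invr_gt0 ?ltr0n // (bigD1 (Ordinal n_gt0)) //=.
  by rewrite ltr_pwDl // sumr_ge0 // => i _; exact: ltW.
have em_gt0 : 0 < expR (t / beta) * m by rewrite mulr_gt0 ?expR_gt0.
have ln_em : ln (expR (t / beta) * m) = t / beta + ln m.
  by rewrite lnM ?posrE ?expR_gt0 // expRK.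
have /(ler_wpM2l (ltW beta_gt0)) em_le := ln_le_subr1 em_gt0.
have mean_ln : beta / n%:R * \sum_(i < n) ln (a i) <= beta * ln m.
  rewrite -mulrA ler_pM2l // ler_pdivrMl ?ltr0n // mE.
  exact: sum_ln_le.
have t_eq : t = beta * ln (expR (t / beta) * m) - beta * ln m.
  by rewrite ln_em mulrDr addrK mulrC divfK ?lt0r_neq0.
lra.
Qed.

End averaging_inequality.

Section mirror_averaging.
Context d (Z : measurableType d) (R : realType) (P : probability Z R)
  (M : nat) (Q : Z -> M.-tuple R -> R) (beta : R).
Hypotheses (M_gt0 : (0 < M)%N) (beta_gt0 : 0 < beta).
Hypothesis mQ :
  measurable_fun (setT `*` simplex R M) (fun p : Z * M.-tuple R => Q p.1 p.2).
Hypothesis vertex_risk_fin :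
  forall j, (\int[P]_z (Q z (unit_vec R M j))%:E)%E \is a fin_num.

Definition loss j z := Q z (unit_vec R M j).
Definition cumloss (t : seq Z) j := \sum_(z <- t) loss j z.
Definition loss_bound z := \sum_(j < M) `|loss j z|.
Definition mean_lse (v : 'I_M -> R) :=
  fine (\int[P]_z (lse beta (fun j => v j + loss j z))%:E)%E.

Lemma measurable_Q th : simplex R M th -> measurable_fun setT (fun z => Q z th).
Proof.
move=> th_simplex.
apply: (measurable_comp (F := setT `*` simplex R M) (g := fun z => (z, th))) mQ _ => //.
- exact: measurableX measurableT (@measurable_simplex R M).
- by move=> _ [z _ <-].
Qed.

Lemma measurable_loss j : measurable_fun setT (loss j).
Proof. exact/measurable_Q/simplex_unit_vec. Qed.

Lemma integrable_loss j : P.-integrable setT (EFin \o loss j).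
Proof.
have mloss : measurable_fun setT (EFin \o loss j) by exact/measurable_EFinP/measurable_loss.
apply/integrableP; split => //.
have := vertex_risk_fin j; rewrite integralE fin_numB => /andP[pos_fin neg_fin].
rewrite (eq_integral (fun z => ((EFin \o loss j)^\+ \+ (EFin \o loss j)^\-) z)%E); last first.
  by move=> z _; rewrite -(congr1 (@^~ z) (fune_abse (EFin \o loss j))).
rewrite ge0_integralD //; first by rewrite lte_add_pinfty // ltey_eq ?pos_fin ?neg_fin.
all: by [exact: measurable_funepos | exact: measurable_funeneg |
         move=> z _; exact: funepos_ge0 | move=> z _; exact: funeneg_ge0].
Qed.

Lemma integrable_loss_bound : P.-integrable setT (EFin \o loss_bound).
Proof.
have -> : EFin \o loss_bound = (fun z => \sum_(j < M) (EFin \o (Num.norm \o loss j)) z)%E.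
  by apply/funext => z; rewrite /= /loss_bound -sumEFin.
by apply: integrable_sum => // j _; exact/integrable_norm/integrable_loss.
Qed.

Lemma cumloss_rcons t z j : cumloss (rcons t z) j = cumloss t j + loss j z.
Proof. by rewrite /cumloss -cats1 big_cat big_seq1. Qed.

Lemma sum_norm_cumloss_le i s :
  \sum_(j < M) `|cumloss (take i s) j| <= \sum_(z <- s) loss_bound z.
Proof.
apply: le_trans (_ : \sum_(j < M) \sum_(z <- take i s) `|loss j z| <= _).
  by apply: ler_sum => j _; exact: ler_norm_sum.
rewrite exchange_big /= -{2}(cat_take_drop i s) big_cat /= lerDl.
by rewrite sumr_ge0 // => z _; rewrite sumr_ge0.
Qed.

Lemma mtheta_simplex zs i : simplex R M (mtheta Q beta zs i).
Proof.
have S_gt0 := sum_expR_gt0 beta M_gt0 (zeta Q zs i).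
split=> [j|]; first by rewrite tnth_mktuple divr_ge0 ?expR_ge0 // ltW.
by under eq_bigr do rewrite tnth_mktuple; rewrite -mulr_suml divff ?lt0r_neq0.
Qed.

Lemma mirror_avg_simplex n zs : (0 < n)%N -> simplex R M (mirror_avg Q beta n zs).
Proof.
move=> n_gt0; split=> [j|].
  rewrite tnth_mktuple mulr_ge0 ?invr_ge0 // sumr_ge0 // => i _.
  by case: (mtheta_simplex zs i).
under eq_bigr do rewrite tnth_mktuple.
rewrite -mulr_sumr exchange_big /=.
under eq_bigr do rewrite (mtheta_simplex zs _).2.
by rewrite sumr_const card_ord -[1 *+ n]mulr_natr mul1r mulVf ?lt0r_neq0 ?ltr0n.
Qed.

Lemma integrable_lse_loss v :
  P.-integrable setT (fun z => (lse beta (fun j => v j + loss j z))%:E).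
Proof.
apply: (integrable_dominated integrable_loss_bound
  (c := ln M%:R + (\sum_(j < M) `|v j|) / beta) (K := beta^-1)).
  apply/measurable_EFinP; apply: (measurable_lse beta (a := fun z j => v j + loss j z)) => j.
  exact: measurable_funD (measurable_loss j).
by move=> z; rewrite lee_fin norm_lse_add_le.
Qed.

Lemma mean_lseE v :
  (mean_lse v)%:E = (\int[P]_z (lse beta (fun j => v j + loss j z))%:E)%E.
Proof. by rewrite fineK //; exact/integrable_fin_num/integrable_lse_loss. Qed.

Lemma measurable_mean_lse : coordwise_measurable mean_lse.
Proof.
move=> dX X a ma.
have mlse : measurable_fun setT
    (fun p : X * Z => (lse beta (fun j => a p.1 j + loss j p.2))%:E).
  apply/measurable_EFinP; apply: (measurable_lse beta (a := fun p j => a p.1 j + loss j p.2)) => j.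
  apply: measurable_funD; first exact: measurableT_comp (ma j) measurable_fst.
  exact: measurableT_comp (measurable_loss j) measurable_snd.
exact: measurableT_comp (fine_measurable measurableT) (measurable_fun_integral_snd P mlse).
Qed.

Lemma norm_mean_lse_le v : `|mean_lse v| <=
  ln M%:R + (\sum_(j < M) `|v j|) / beta + beta^-1 * fine (\int[P]_z (loss_bound z)%:E)%E.
Proof.
have lse_le s : `|lse beta (fun j => v j + cumloss s j)| <=
    (ln M%:R + (\sum_(j < M) `|v j|) / beta) + beta^-1 * \sum_(z <- s) loss_bound z.
  apply: le_trans (norm_lse_add_le M_gt0 beta_gt0 _ _) _; rewrite lerD2l ler_pM2l ?invr_gt0 //.
  by have := sum_norm_cumloss_le (size s) s; rewrite take_size.
have E1 : Eiter P 1 (fun s => (lse beta (fun j => v j + cumloss s j))%:E) = (mean_lse v)%:E.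
  rewrite mean_lseE /=; apply: eq_integral => z _.
  by congr (EFin (lse beta _)); apply/funext => j; rewrite /cumloss big_seq1.
by have := (Eiter_bounded integrable_loss_bound 1 lse_le).2; rewrite E1 /= mulr1.
Qed.

Lemma dominated_lse_cumloss k i :
  dominated loss_bound k (fun (_ : R) s => lse beta (cumloss (take i s))).
Proof.
split.
  have := jointly_measurable_cumsum measurable_loss k i (a := fun (_ : R) _ => 0)
    (@measurable_lse R M beta) (fun=> measurable_cst _).
  by under [in X in X -> _]eq_fun do under eq_fun do under eq_fun do rewrite add0r.
exists (fun=> ln M%:R), beta^-1 => _ s.
apply: le_trans (norm_lse_le M_gt0 beta_gt0 _) _.
by rewrite lerD2l mulrC ler_pM2l ?invr_gt0 ?sum_norm_cumloss_le.
Qed.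

Lemma dominated_mean_lse_cumloss k i :
  dominated loss_bound k (fun (_ : R) s => mean_lse (cumloss (take i s))).
Proof.
split.
  have := jointly_measurable_cumsum measurable_loss k i (a := fun (_ : R) _ => 0)
    measurable_mean_lse (fun=> measurable_cst _).
  by under [in X in X -> _]eq_fun do under eq_fun do under eq_fun do rewrite add0r.
exists (fun=> ln M%:R + beta^-1 * fine (\int[P]_z (loss_bound z)%:E)%E), beta^-1 => _ s.
apply: le_trans (norm_mean_lse_le _) _.
by rewrite -addrA (addrC (_ / beta)) addrA lerD2l mulrC ler_pM2l ?invr_gt0 ?sum_norm_cumloss_le.
Qed.

Variable n : nat.
Hypothesis n_gt0 : (0 < n)%N.

Definition exp_excess zs z := \sum_(j < M)
  tnth (mirror_avg Q beta n zs) j * expR (- (loss j z - Q z (mirror_avg Q beta n zs)) / beta).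

Lemma Q_mirror_avg_le zs z :
  Q z (mirror_avg Q beta n zs) <= beta * (exp_excess zs z - 1) - beta / n%:R *
    \sum_(i < n) (lse beta (fun j => cumloss (take i zs) j + loss j z) -
                  lse beta (cumloss (take i zs))).
Proof.
set th := mirror_avg Q beta n zs.
have exp_excessE : exp_excess zs z = expR (Q z th / beta) *
    \sum_(j < M) (n%:R^-1 * \sum_(i < n) tnth (mtheta Q beta zs i) j) *
                 expR (- loss j z / beta).
  rewrite mulr_sumr; apply: eq_bigr => j _; rewrite tnth_mktuple mulrCA -expRD.
  by congr (_ * expR _); rewrite /th; ring.
have lse_step i : lse beta (fun j => cumloss (take i zs) j + loss j z) -
    lse beta (cumloss (take i zs)) =
    ln (\sum_(j < M) tnth (mtheta Q beta zs i) j * expR (- loss j z / beta)).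
  by rewrite lse_addE //; congr ln; apply: eq_bigr => j _; rewrite tnth_mktuple.
under eq_bigr do rewrite lse_step.
rewrite exp_excessE; apply: le_tilted_mean => // [|j]; last exact: expR_gt0.
exact: mtheta_simplex.
Qed.

Variable Psi : M.-tuple R -> M.-tuple R -> R.
Hypothesis Psi_concave :
  forall th', simplex R M th' -> concave_on (simplex R M) (fun th => Psi th th').
Hypothesis Psi_diag : forall th, simplex R M th -> Psi th th = 1.
Hypothesis exp_excess_le_Psi : forall th th', simplex R M th -> simplex R M th' ->
  (\int[P]_z (expR (- (Q z th - Q z th') / beta))%:E <= (Psi th th')%:E)%E.

Lemma measurable_exp_excess_vertex th j : simplex R M th ->
  measurable_fun setT (fun z => expR (- (loss j z - Q z th) / beta)).
Proof.
move=> th_simplex; apply: measurableT_comp (@measurable_expR R) _.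
apply: measurable_funM => //; apply: measurable_funN.
by apply: measurable_funB; [exact: measurable_loss | exact: measurable_Q].
Qed.

Lemma integral_exp_excess_le1 zs : (\int[P]_z (exp_excess zs z)%:E <= 1)%E.
Proof.
set th := mirror_avg Q beta n zs.
have th_simplex : simplex R M th := mirror_avg_simplex zs n_gt0.
have [th_ge0 _] := th_simplex.
rewrite /exp_excess -/th; under eq_integral do rewrite -sumEFin.
rewrite ge0_integral_sum //; last 2 first.
- move=> j; apply/measurable_EFinP; apply: measurable_funM => //.
  exact: measurable_exp_excess_vertex.
- by move=> j z _; rewrite lee_fin mulr_ge0 ?expR_ge0.
apply: (@le_trans _ _ (\sum_(j < M) (tnth th j * Psi (unit_vec R M j) th)%:E)%E).
  apply: lee_sum => j _; under eq_integral do rewrite EFinM.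
  have exp_ge0 z : (0 <= (expR (- (loss j z - Q z th) / beta))%:E)%E.
    by rewrite lee_fin expR_ge0.
  have mexp : measurable_fun setT (fun z => (expR (- (loss j z - Q z th) / beta))%:E).
    exact/measurable_EFinP/measurable_exp_excess_vertex.
  rewrite (ge0_integralZl _ _ mexp (fun z _ => exp_ge0 z)) ?lee_fin //.
  rewrite EFinM lee_pmul ?lee_fin ?integral_ge0 //.
  exact: (exp_excess_le_Psi (@simplex_unit_vec R M j) th_simplex).
rewrite sumEFin lee_fin -(Psi_diag th_simplex).
exact: (le_concave_vertices (Psi_concave th_simplex)).
Qed.

Lemma integrable_exp_excess zs : P.-integrable setT (fun z => (exp_excess zs z)%:E).
Proof.
have th_simplex := mirror_avg_simplex zs n_gt0.
have [th_ge0 _] := th_simplex.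
have excess_ge0 z : 0 <= exp_excess zs z.
  by apply: sumr_ge0 => j _; rewrite mulr_ge0 ?expR_ge0.
apply/integrableP; split.
  apply/measurable_EFinP; apply: measurable_sum => j; apply: measurable_funM => //.
  exact: measurable_exp_excess_vertex.
under eq_integral do rewrite gee0_abs ?lee_fin //.
exact: le_lt_trans (integral_exp_excess_le1 zs) (ltry _).
Qed.

Lemma integral_sum_lse_loss (v : 'I_n -> 'I_M -> R) :
  P.-integrable setT (fun z => (\sum_(i < n) lse beta (fun j => v i j + loss j z))%:E) /\
  (\int[P]_z (\sum_(i < n) lse beta (fun j => v i j + loss j z))%:E =
    (\sum_(i < n) mean_lse (v i))%:E)%E.
Proof.
under eq_fun do rewrite -sumEFin.
split; first by apply: integrable_sum => // i _; exact: integrable_lse_loss.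
rewrite integral_sum // => [|i]; last exact: integrable_lse_loss.
by rewrite -sumEFin; apply: eq_bigr => i _; rewrite mean_lseE.
Qed.

Lemma integral_Q_mirror_avg_le zs :
  (\int[P]_z (Q z (mirror_avg Q beta n zs))%:E <=
    (beta / n%:R * \sum_(i < n) (lse beta (cumloss (take i zs)) -
                                mean_lse (cumloss (take i zs))))%:E)%E.
Proof.
set r := beta / n%:R.
set L := \sum_(i < n) lse beta (cumloss (take i zs)).
set G := fun z => \sum_(i < n) lse beta (fun j => cumloss (take i zs) j + loss j z).
have [G_int G_integral] := integral_sum_lse_loss (fun i => cumloss (take i zs)).
have Y_int := integrable_exp_excess zs.
apply: (@le_trans _ _
  (\int[P]_z ((beta * exp_excess zs z)%:E + (- beta + r * L + - r * G z)%:E))%E).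
  apply: le_integral_any => z; rewrite -EFinD lee_fin.
  apply: le_trans (Q_mirror_avg_le zs z) _.
  by rewrite /G /L /r /= sumrB le_eqVlt; apply/orP; left; apply/eqP; ring.
rewrite integralD //; last 2 first.
- by under eq_fun do rewrite EFinM; exact: integrableZl.
- have -> : (fun z => (- beta + r * L + - r * G z)%:E) =
      ((EFin \o cst (- beta + r * L)%R) \+ (fun z => (- r)%R%:E * (EFin \o G) z))%E.
    by apply/funext => z /=; rewrite EFinD EFinM.
  apply: integrableD => //; first exact: finite_measure_integrable_cst.
  exact: integrableZl.
rewrite integral_affine // G_integral /=.
under eq_integral do rewrite EFinM.
rewrite integralZl // -(fineK (integrable_fin_num measurableT Y_int)) -EFinM -EFinD lee_fin.
have Y_le1 : fine (\int[P]_z (exp_excess zs z)%:E)%E <= 1.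
  by rewrite -lee_fin fineK ?integral_exp_excess_le1 // integrable_fin_num.
have := ler_wpM2l (ltW beta_gt0) Y_le1; rewrite /L sumrB mulrBr mulNr mulr1; lra.
Qed.

Definition expected_lse k := fine (Eiter P k (fun t => (lse beta (cumloss t))%:E)).

Lemma expected_lseE k :
  Eiter P k (fun t => (lse beta (cumloss t))%:E) = (expected_lse k)%:E.
Proof.
have lse_le t : `|lse beta (cumloss t)| <=
    ln M%:R + beta^-1 * \sum_(z <- t) loss_bound z.
  apply: le_trans (norm_lse_le M_gt0 beta_gt0 _) _; rewrite lerD2l mulrC ler_pM2l ?invr_gt0 //.
  by have := sum_norm_cumloss_le (size t) t; rewrite take_size.
by rewrite fineK // (Eiter_bounded integrable_loss_bound k lse_le).1.
Qed.

Lemma Eiter_mean_lse k : Eiter P k (fun s => (mean_lse (cumloss s))%:E) =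
  Eiter P k.+1 (fun s => (lse beta (cumloss s))%:E).
Proof.
rewrite Eiter_rcons; congr (Eiter P k _); apply/funext => s.
rewrite mean_lseE; apply: eq_integral => z _.
by congr (EFin (lse beta _)); apply/funext => j; rewrite cumloss_rcons.
Qed.

Lemma expected_lse0 : expected_lse 0 = ln M%:R.
Proof.
rewrite /expected_lse /= -(@lse0 R M beta); congr (lse beta _).
by apply/funext => j; rewrite /cumloss big_nil.
Qed.

Lemma expected_lse_ge j k :
  - (k%:R / beta) * fine (\int[P]_z (loss j z)%:E)%E <= expected_lse k.
Proof.
rewrite -lee_fin -expected_lseE.
have -> : - (k%:R / beta) * fine (\int[P]_z (loss j z)%:E)%E =
    0 + - beta^-1 * k%:R * fine (\int[P]_z (loss j z)%:E)%E by ring.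
rewrite -(Eiter_affine _ _ _ (integrable_loss j)).
apply: le_Eiter => t; rewrite add0r lee_fin.
by rewrite mulNr mulrC -mulNr; exact: lse_ge.
Qed.

Lemma Eiter_lse_increments :
  Eiter P n.-1 (fun zs => (beta / n%:R * \sum_(i < n)
      (lse beta (cumloss (take i zs)) - mean_lse (cumloss (take i zs))))%:E) =
  (beta / n%:R * (expected_lse 0 - expected_lse n))%:E.
Proof.
set r := beta / n%:R.
pose f i (_ : R) s :=
  r * lse beta (cumloss (take i s)) + (- r) * mean_lse (cumloss (take i s)).
have f_dom i : (i < n)%N -> dominated loss_bound n.-1 (f i).
  move=> _; apply: dominated_linear; first exact: dominated_lse_cumloss.
  exact: dominated_mean_lse_cumloss.
have Ef i : (i < n)%N -> Eiter P n.-1 (fun s => (f i 0 s)%:E) =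
    (r * expected_lse i - r * expected_lse i.+1)%:E.
  move=> i_lt_n; have i_le : (i <= n.-1)%N by rewrite -ltnS prednK.
  rewrite (Eiter_linear integrable_loss_bound _ _ (0 : R) (dominated_lse_cumloss _ _)
                        (dominated_mean_lse_cumloss _ _)).
  rewrite (Eiter_take_le P (fun s => (lse beta (cumloss s))%:E)) //.
  rewrite (Eiter_take_le P (fun s => (mean_lse (cumloss s))%:E)) //.
  by rewrite Eiter_mean_lse !expected_lseE -!EFinM -EFinD mulNr.
rewrite (_ : (fun zs => _) = fun s => (\sum_(i < n) f i 0 s)%:E); last first.
  apply/funext => s; rewrite mulr_sumr; congr EFin; apply: eq_bigr => i _.
  by rewrite /f mulNr mulrBr.
rewrite (Eiter_sum integrable_loss_bound (0 : R) f_dom).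
under eq_bigr => i _ do rewrite Ef //.
rewrite sumEFin; congr EFin.
under eq_bigr do rewrite -mulrBr; rewrite -mulr_sumr; congr (_ * _).
rewrite -opprB -(telescope_sumr expected_lse (leq0n n)) big_mkord -sumrN.
by apply: eq_bigr => i _; rewrite opprB.
Qed.

Lemma Eiter_mirror_risk_le j :
  (Eiter P n.-1 (fun zs => \int[P]_z (Q z (mirror_avg Q beta n zs))%:E) <=
    (fine (\int[P]_z (loss j z)%:E) + beta * ln M%:R / n%:R)%:E)%E.
Proof.
apply: le_trans (le_Eiter P n.-1 integral_Q_mirror_avg_le) _.
rewrite Eiter_lse_increments lee_fin expected_lse0.
set r := beta / n%:R; have r_gt0 : 0 < r by rewrite divr_gt0 ?ltr0n.
have := ler_wpM2l (ltW r_gt0) (expected_lse_ge j n).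
have -> : r * (- (n%:R / beta) * fine (\int[P]_z (loss j z)%:E)%E) =
    - fine (\int[P]_z (loss j z)%:E)%E.
  by rewrite /r; field; rewrite !lt0r_neq0 ?ltr0n.
have -> : beta * ln M%:R / n%:R = r * ln M%:R by rewrite /r mulrAC.
rewrite mulrBr; lra.
Qed.

End mirror_averaging.

Unset Implicit Arguments.

Theorem theorem4p2 (d : measure_display) (Z : measurableType d) (R : realType)
  (P : probability Z R) (M : nat) (Q : Z -> M.-tuple R -> R) (beta : R)
  (Psi : M.-tuple R -> M.-tuple R -> R) (n : nat) :
  (2 <= M)%N -> (1 <= n)%N ->
  measurable_fun (setT `*` simplex R M) (fun p : Z * M.-tuple R => Q p.1 p.2) ->
  (forall th, simplex R M th -> expect_exists P (fun z => Q z th)) ->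
  (forall j : 'I_M, (\int[P]_z (Q z (unit_vec R M j))%:E)%E \is a fin_num) ->
  0 < beta ->
  measurable_fun (simplex R M `*` simplex R M)
    (fun p : M.-tuple R * M.-tuple R => Psi p.1 p.2) ->
  (forall th th', simplex R M th -> simplex R M th' -> 0 <= Psi th th') ->
  (forall th', simplex R M th' -> concave_on (simplex R M) (fun th => Psi th th')) ->
  (forall th, simplex R M th -> Psi th th = 1) ->
  (forall th th', simplex R M th -> simplex R M th' ->
     (\int[P]_z (expR (- (Q z th - Q z th') / beta))%:E <= (Psi th th')%:E)%E) ->
  (Eiter P n.-1 (fun zs => \int[P]_z (Q z (mirror_avg Q beta n zs))%:E)
    <= \big[Order.min/+oo]_(j < M) (\int[P]_z (Q z (unit_vec R M j))%:E)
       + (beta * ln M%:R / n%:R)%:E)%E.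
Proof.
move=> M_gt1 n_gt0 mQ _ vertex_risk_fin beta_gt0 _ _ Psi_concave Psi_diag exp_excess_le_Psi.
rewrite -leeBlDr //; apply: le_bigmin => [|j _]; first exact: leey.
rewrite leeBlDr // -(fineK (vertex_risk_fin j)) -EFinD.
exact: (Eiter_mirror_risk_le (ltnW M_gt1) beta_gt0 mQ vertex_risk_fin n_gt0
  Psi_concave Psi_diag exp_excess_le_Psi j).
Qed.
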